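(* Let $k\in\mathbb N$, $\alpha,\beta\in\mathbb R$, $0<p,q\le\infty$, and $0<\delta\le1/(2k)$. Let $J_i=[k\delta i,k\delta(i+1/2)]$ and define \[ f_\delta(x)=\begin{cases}(-1)^i, & x\in J_i,\ 0\le i\le\lfloor1/(2k\delta)\rfloor,\\ 0,&\text{otherwise}.\end{cases} \] Then $\|w_{\alpha,\beta}f_\delta\|_p\sim1$ and $\Omega_\varphi^k(f_\delta,\delta)_{w_{\alpha,\beta},q}\ge c>0$, with constants independent of $\delta$.
   Context: For $x\in[-1,1]$, $\varphi(x)=\sqrt{1-x^2}$, $w_{\alpha,\beta}(x)=(1+x)^\alpha(1-x)^\beta$; $\|\cdot\|_p$ is the $L_p[-1,1]$ (quasi)norm, $\|g\|_{L_q(S)}$ the $L_q$ (quasi)norm over $S$. $\Delta_h^k(f,x)=\sum_{i=0}^k\binom ki(-1)^{k-i}f(x-kh/2+ih)$ if $x\pm kh/2\in[-1,1]$, else $0$. For a weight $w$, $\Omega_\varphi^k(f,\delta)_{w,q}=\sup_{0<h\le\delta}\|w(x)\Delta^k_{h\varphi(x)}(f,x)\|_{L_q[-1+2k^2h^2,1-2k^2h^2]}$. $F\sim G$ means $c_1F\le G\le c_2F$ with positive constants independent of $\delta$. *)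

From HB Require Import structures.
From mathcomp Require Import all_boot all_order all_algebra.
From mathcomp Require Import all_classical all_reals all_analysis.
Set Implicit Arguments. Unset Strict Implicit. Unset Printing Implicit Defensive.
Import Order.TTheory GRing.Theory Num.Theory.
Import numFieldNormedType.Exports.
Local Open Scope classical_set_scope.
Local Open Scope ring_scope.

Section Defs.
Variable R : realType.

Definition vphi (x : R) : R := Num.sqrt (1 - x ^+ 2).

Definition wab (a b : R) (x : R) : R := (1 + x) `^ a * (1 - x) `^ b.

Definition LnormOn (S : set R) (q : \bar R) (g : R -> R) : \bar R :=
  Lnorm (@lebesgue_measure R) q (fun x => (if `[< S x >] then g x else 0)%:E).

Definition Lnorm11 (p : \bar R) (g : R -> R) : \bar R := LnormOn `[-1, 1] p g.

Definition Delta (k : nat) (h : R) (f : R -> R) (x : R) : R :=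
  if (-1 <= x - k%:R * h / 2) && (x + k%:R * h / 2 <= 1) then
    \sum_(i < k.+1) ('C(k, i))%:R * (-1) ^+ (k - i) * f (x - k%:R * h / 2 + i%:R * h)
  else 0.

Definition Omega (k : nat) (f : R -> R) (delta : R) (w : R -> R) (q : \bar R)
  : \bar R :=
  ereal_sup [set LnormOn `[-1 + 2 * k%:R ^+ 2 * h ^+ 2, 1 - 2 * k%:R ^+ 2 * h ^+ 2] q
                (fun x => w x * Delta k (h * vphi x) f x) | h in `]0, delta]].

Definition Jint (k : nat) (delta : R) (i : nat) : set R :=
  `[k%:R * delta * i%:R, k%:R * delta * (i%:R + 2^-1)].

(* f_delta(x) = (-1)^i on J_i for 0 <= i <= floor(1/(2 k delta)), 0 otherwise
   (the J_i are pairwise disjoint, so this sum has at most one nonzero term) *)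
Definition fdelta (k : nat) (delta : R) (x : R) : R :=
  \sum_(i < (Num.truncn (1 / (2 * k%:R * delta))).+1)
     (if `[< Jint k delta i x >] then (-1) ^+ i else 0).

End Defs.

(* On [0, 3/4] the weight w_{alpha,beta} lies between exp(-3(|alpha|+|beta|)) and
   exp(3(|alpha|+|beta|)); f_delta is supported in [0, 1] and has modulus 1 on the
   disjoint intervals J_0, ..., J_N, N = floor(1/(2 k delta)), of total length
   (N + 1) k delta / 2 > 1/4.  This gives both norm bounds.
   For the modulus take h = delta / (8k) and, for each i <= N, a window of length h/8
   just left of the node k delta i, shifted by k h phi(k delta i) / 2.  For x in the
   window, phi(x) differs from phi(k delta i) by O(h), so the last point
   x + k h phi(x) / 2 of the k-th difference lies in J_i while all the other points
   fall into the gap between J_(i-1) and J_i: the difference equals (-1)^i.  The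
   N + 1 windows have total length > 1/(128 k^2). *)
From HB Require Import structures.
From mathcomp Require Import all_boot all_order all_algebra.
From mathcomp Require Import all_classical all_reals all_analysis.
From mathcomp Require Import measurable_realfun ess_sup_inf.
From mathcomp.algebra_tactics Require Import ring lra.
Set Implicit Arguments.
Unset Strict Implicit.
Unset Printing Implicit Defensive.
Import Order.TTheory GRing.Theory Num.Theory.
Import numFieldNormedType.Exports.
Local Open Scope ring_scope.

Section LnormOn_bounds.
Variable R : realType.
Local Open Scope classical_set_scope.
Local Notation mu := (@lebesgue_measure R).

(* Unlike [ge0_le_integral], no measurability is needed: the integral of a
   nonnegative function is a supremum over its simple minorants. *)
Lemma ge0_le_integral_setT (f g : R -> \bar R) : (forall x, 0 <= f x)%E ->
  (forall x, f x <= g x)%E -> (\int[mu]_x f x <= \int[mu]_x g x)%E.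
Proof.
move=> f0 fg; have g0 x : (0 <= g x)%E by apply: le_trans (fg x).
rewrite (ge0_integralTE mu f0) (ge0_integralTE mu g0).
apply: ereal_sup_le => _ [h hf <-]; exists h => //= x.
exact: le_trans (hf x) (fg x).
Qed.

Lemma lebesgue_measure_itvcc (a b : R) : a <= b -> mu `[a, b] = (b - a)%:E.
Proof.
move=> ab; rewrite lebesgue_measure_itv /= lte_fin.
have [lt|] := boolP (a < b); first by rewrite -EFinD.
rewrite -leNgt => ba; have -> : a = b by apply/le_anti; rewrite ab.
by rewrite subrr.
Qed.

Lemma integral_cst_indic (A : set R) (c : R) : measurable A -> 0 <= c ->
  (\int[mu]_x (c * \1_A x)%:E = c%:E * mu A)%E.
Proof.
move=> mA c0.
rewrite (@integralZl_indic _ _ _ mu setT measurableT (fun _ => A) c) //=.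
- by rewrite integral_indic // setIT.
- by move=> /lt_geF; rewrite c0.
Qed.

Lemma lebesgue_measure_setT_gt0 : (0 < mu [set: R])%E.
Proof.
apply: (@lt_le_trans _ _ (mu `[0, 1])); last by apply: le_measure; rewrite ?inE.
by rewrite lebesgue_measure_itvcc ?ler01 // lte_fin subr0 ltr01.
Qed.

(* The [L_p] norm of a function of modulus [m] on a set of measure [L]
   (for [p = +oo] it does not depend on [L]). *)
Definition Lnorm_cst (p : \bar R) (m L : R) : R :=
  if p is r%:E then (m `^ r * L) `^ r^-1 else m.

Lemma Lnorm_cst_gt0 p m L : 0 < m -> 0 < L -> 0 < Lnorm_cst p m L.
Proof. by case: p => [r||] m0 L0 //=; apply: powR_gt0; rewrite mulr_gt0 ?powR_gt0. Qed.

Lemma LnormOn_ge_sum_itv (S : set R) (r m : R) (G : R -> R) (n : nat)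
    (a b : nat -> R) :
  0 < r -> 0 < m -> (forall i, (i < n)%N -> a i <= b i) ->
  (forall i j x, (i < n)%N -> (j < n)%N ->
     a i <= x <= b i -> a j <= x <= b j -> i = j) ->
  (forall i x, (i < n)%N -> a i <= x <= b i -> S x /\ m <= `|G x|) ->
  (((m `^ r * \sum_(i < n) (b i - a i)) `^ r^-1)%:E <= LnormOn S r%:E G)%E.
Proof.
move=> r0 m0 ab disj mG; rewrite /LnormOn Lnorm.unlock /=.
set g := fun x => (if `[< S x >] then G x else 0).
have mr0 := powR_ge0 m r.
have pointwise x :
    (\sum_(i < n) (m `^ r * \1_(`[a i, b i]) x)%:E <= `|(g x)%:E| `^ r)%E.
  rewrite sumEFin; have [[i ilt xi]|nox] :=
    pselect (exists2 i, (i < n)%N & a i <= x <= b i); last first.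
    rewrite big1 ?lee_fin ?powR_ge0 // => j _; rewrite indicE.
    case: (boolP (x \in _)) => [/set_mem|_]; last by rewrite mulr0.
    by rewrite /= in_itv /= => xj; case: nox; exists j.
  rewrite (bigD1 (Ordinal ilt)) //= big1 ?addr0; last first.
    move=> j /eqP jne; rewrite indicE.
    case: (boolP (x \in _)) => [/set_mem|_]; last by rewrite mulr0.
    rewrite /= in_itv /= => xj; case: jne; apply: val_inj.
    exact: disj (ltn_ord j) ilt xj xi.
  have [Sx mGx] := mG _ _ ilt xi.
  rewrite indicE mem_set /= ?in_itv // mulr1 /g asboolT //= lee_fin.
  by apply: ge0_ler_powR; rewrite ?nnegrE ?(ltW r0) ?(ltW m0).
have int_ge : ((m `^ r * \sum_(i < n) (b i - a i))%:E <=
    \int[mu]_x (`|(g x)%:E| `^ r))%E.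
  apply: le_trans (@ge0_le_integral_setT
    (fun x => \sum_(i < n) (m `^ r * \1_(`[a i, b i]) x)%:E) _ _ pointwise); last first.
    by move=> x; rewrite sumEFin lee_fin sumr_ge0 // => i _; rewrite mulr_ge0.
  rewrite ge0_integral_sum //; last first.
  - by move=> i x _; rewrite lee_fin mulr_ge0.
  - by move=> i; apply/measurable_EFinP; apply: measurable_funM.
  rewrite (eq_bigr (fun i : 'I_n => (m `^ r * (b i - a i))%:E)) ?sumEFin ?mulr_sumr //.
  by move=> i _; rewrite integral_cst_indic // lebesgue_measure_itvcc ?ab.
apply: gt0_ler_poweR int_ge; rewrite ?invr_ge0 ?ltW // in_itv /= leey andbT.
  by rewrite lee_fin mulr_ge0 // sumr_ge0 // => i _; rewrite subr_ge0 ab.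
by apply: integral_ge0 => x _; rewrite lee_fin powR_ge0.
Qed.

Lemma LnormOn_ge_itv_infty (S : set R) (m : R) (G : R -> R) (a b : R) : a < b ->
  (forall x, a <= x <= b -> S x /\ m <= `|G x|) -> (m%:E <= LnormOn S +oo%E G)%E.
Proof.
move=> ab mG; rewrite /LnormOn Lnorm.unlock lebesgue_measure_setT_gt0 leNgt.
apply/negP => sup_lt.
have [N [mN N0 sN]] := ess_sup_ge mu
  (abse \o (fun x => (if `[< S x >] then G x else 0)%:E)).
have : (mu `[a, b] <= mu N)%E.
  apply: le_measure; rewrite ?inE // => x; rewrite /= in_itv /= => xab.
  apply: sN; have [Sx mGx] := mG _ xab; rewrite /= asboolT // => Gx_le.
  by have := le_lt_trans Gx_le sup_lt; rewrite lte_fin ltNge mGx.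
rewrite N0 (lebesgue_measure_itvcc (ltW ab)) => ba_le0.
have : ((b - a)%:E <= 0%:E)%E by [].
by rewrite lee_fin subr_le0 leNgt ab.
Qed.

Lemma LnormOn_ge_itv (S : set R) (p : \bar R) (m L : R) (G : R -> R) (n : nat)
    (a b : nat -> R) :
  (0 < p)%E -> 0 < m -> 0 < L -> (forall i, (i < n)%N -> a i < b i) ->
  (forall i j x, (i < n)%N -> (j < n)%N ->
     a i <= x <= b i -> a j <= x <= b j -> i = j) ->
  L <= \sum_(i < n) (b i - a i) ->
  (forall i x, (i < n)%N -> a i <= x <= b i -> S x /\ m <= `|G x|) ->
  ((Lnorm_cst p m L)%:E <= LnormOn S p G)%E.
Proof.
case: p => [r||] // p0 m0 L0 ab disj Lsum mG.
  have r0 : 0 < r by [].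
  apply: le_trans (LnormOn_ge_sum_itv r0 m0 _ disj mG); last by move=> i /ab/ltW.
  rewrite lee_fin; apply: ge0_ler_powR; first by rewrite invr_ge0 ltW.
  - by rewrite nnegrE mulr_ge0 ?powR_ge0 ?ltW.
  - by rewrite nnegrE mulr_ge0 ?powR_ge0 ?(le_trans (ltW L0)).
  - by apply: ler_wpM2l; rewrite ?powR_ge0.
case: n ab disj Lsum mG => [|n] ab _ Lsum mG.
  by move: Lsum; rewrite big_ord0 leNgt L0.
by apply: LnormOn_ge_itv_infty (ab 0%N isT) _ => x; apply: mG.
Qed.

Lemma LnormOn_le_itv (S : set R) (p : \bar R) (M : R) (G : R -> R) (a b : R) :
  (0 < p)%E -> 0 <= M -> a <= b ->
  (forall x, S x -> `|G x| <= M * \1_(`[a, b]) x) ->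
  (LnormOn S p G <= (Lnorm_cst p M (b - a))%:E)%E.
Proof.
set g := fun x => (if `[< S x >] then G x else 0).
move=> p0 M0 ab MG; have g_le x : `|g x| <= M * \1_(`[a, b]) x.
  by rewrite /g; case: ifPn => [/asboolP/MG//|_]; rewrite normr0 mulr_ge0.
rewrite /LnormOn Lnorm.unlock -/g; case: p p0 => [r||] //= r0; last first.
  rewrite lebesgue_measure_setT_gt0; apply/ess_supP/aeW => x /=.
  by rewrite lee_fin (le_trans (g_le x)) // indicE; case: (_ \in _); rewrite ?mulr1 ?mulr0.
rewrite lte_fin in r0.
have int_le : (\int[mu]_x (`|(g x)%:E| `^ r) <= (M `^ r * (b - a))%:E)%E.
  apply: le_trans (@ge0_le_integral_setT _
    (fun x => (M `^ r * \1_(`[a, b]) x)%:E) _ _) _.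
  - by move=> x; rewrite lee_fin powR_ge0.
  - move=> x /=; rewrite lee_fin; have := g_le x; rewrite indicE.
    case: (_ \in _); rewrite ?mulr1 ?mulr0 => gx_le.
      by apply: ge0_ler_powR; rewrite ?nnegrE ?(ltW r0).
    have -> : `|g x| = 0 by apply/le_anti; rewrite gx_le normr_ge0.
    by rewrite powR0 ?gt_eqF.
  by rewrite integral_cst_indic ?powR_ge0 // lebesgue_measure_itvcc.
apply: gt0_ler_poweR int_le; rewrite ?invr_ge0 ?ltW // in_itv /= leey andbT.
  by apply: integral_ge0 => x _; rewrite lee_fin powR_ge0.
by rewrite lee_fin mulr_ge0 ?powR_ge0 ?subr_ge0.
Qed.

Lemma LnormOn_le_Omega (k : nat) (f w : R -> R) (delta h : R)
    (q : \bar R) : 0 < h <= delta ->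
  (LnormOn `[(-1 + 2 * k%:R ^+ 2 * h ^+ 2)%R, (1 - 2 * k%:R ^+ 2 * h ^+ 2)%R] q
     (fun x => (w x * Delta k (h * vphi x) f x)%R) <= Omega k f delta w q)%E.
Proof. by move=> h_itv; apply: ereal_sup_ubound; exists h; rewrite ?in_itv. Qed.

End LnormOn_bounds.

Section real_estimates.
Variable R : realType.

Lemma vphi_bounds (x : R) : -(3/4) <= x <= 3/4 -> 1/2 <= vphi x <= 1.
Proof.
move=> /andP[x_ge x_le]; have x2 : 0 <= 1 - x ^+ 2 by nra.
have := sqrtr_ge0 (1 - x ^+ 2); have := sqr_sqrtr x2.
by rewrite /vphi => ? ?; apply/andP; split; nra.
Qed.

Lemma vphi_lipschitz (x y : R) : -(3/4) <= x <= 3/4 -> -(3/4) <= y <= 3/4 ->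
  `|vphi x - vphi y| <= 2 * `|x - y|.
Proof.
move=> x34 y34; have /andP[vx1 vx2] := vphi_bounds x34.
have /andP[vy1 vy2] := vphi_bounds y34.
move: x34 y34 => /andP[x1 x2] /andP[y1 y2].
have vx : vphi x ^+ 2 = 1 - x ^+ 2 by rewrite /vphi sqr_sqrtr //; nra.
have vy : vphi y ^+ 2 = 1 - y ^+ 2 by rewrite /vphi sqr_sqrtr //; nra.
have key : (vphi x - vphi y) * (vphi x + vphi y) = (y - x) * (y + x).
  by rewrite -subr_sqr vx vy; ring.
have := congr1 Num.norm key; rewrite !normrM (ger0_norm (_ : 0 <= vphi x + vphi y)); last by lra.
rewrite (distrC y) (addrC y) => conj_eq.
have sum_le : `|x + y| <= 3/2 by rewrite ler_norml; apply/andP; split; lra.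
have := normr_ge0 (vphi x - vphi y); have := normr_ge0 (x - y).
by move=> ? ?; nra.
Qed.

Lemma norm_ln_le3 (a : R) : 1/4 <= a <= 2 -> `|ln a| <= 3.
Proof.
move=> /andP[a1 a2]; have a0 : 0 < a by lra.
have ln_le (t : R) : 0 < t -> ln t <= t - 1.
  by move=> t0; have := @le_ln1Dx _ (t - 1); rewrite addrCA subrr addr0; apply; lra.
have ia0 : 0 < a^-1 by rewrite invr_gt0.
have ia4 : a^-1 <= 4.
  by rewrite -[4]invrK lef_pV2 ?posrE //; lra.
have := ln_le _ a0; have := ln_le _ ia0; rewrite lnV ?posrE // => ? ?.
by rewrite ler_norml; apply/andP; split; lra.
Qed.

Definition wab_bound (al be : R) : R := expR (3 * (`|al| + `|be|)).

Lemma wab_bound_gt0 al be : 0 < wab_bound al be.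
Proof. exact: expR_gt0. Qed.

Lemma wab_bounds (al be x : R) : -(1/2) <= x <= 3/4 ->
  (wab_bound al be)^-1 <= wab al be x <= wab_bound al be.
Proof.
move=> /andP[x1 x2]; have [xp xm] : 0 < 1 + x /\ 0 < 1 - x by split; lra.
rewrite /wab /powR !gt_eqF // -expRD -expRN.
have l1 : `|ln (1 + x)| <= 3 by apply: norm_ln_le3; apply/andP; split; lra.
have l2 : `|ln (1 - x)| <= 3 by apply: norm_ln_le3; apply/andP; split; lra.
have t1 : `|al * ln (1 + x)| <= `|al| * 3 by rewrite normrM ler_wpM2l.
have t2 : `|be * ln (1 - x)| <= `|be| * 3 by rewrite normrM ler_wpM2l.
move: t1 t2; rewrite !ler_norml => /andP[? ?] /andP[? ?].
by apply/andP; split; rewrite ler_expR; lra.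
Qed.

Lemma Delta_last_node (k : nat) (h : R) (f : R -> R) x :
  -1 <= x - k%:R * h / 2 -> x + k%:R * h / 2 <= 1 ->
  (forall j, (j < k)%N -> f (x - k%:R * h / 2 + j%:R * h) = 0) ->
  Delta k h f x = f (x + k%:R * h / 2).
Proof.
move=> lo hi fj0; rewrite /Delta lo hi big_ord_recr /= big1 ?add0r.
  by rewrite binn subnn expr0 !mul1r; congr f; field.
by move=> j _; rewrite fj0 ?mulr0.
Qed.

End real_estimates.

Lemma grid_index_unique (R : realType) (c s t x : R) (i j : nat) :
  0 < c -> t - s < c ->
  s <= x - c * i%:R <= t -> s <= x - c * j%:R <= t -> i = j.
Proof.
move=> c0 st /andP[xi1 xi2] /andP[xj1 xj2].
have step (m n : nat) : (m < n)%N -> c * m%:R + c <= c * n%:R.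
  move=> mn; have : m%:R + 1 <= n%:R :> R by rewrite natr1 ler_nat.
  by nra.
by case: (ltngtP i j) => // [/step | /step] ?; exfalso; lra.
Qed.

Section fdelta_estimates.
Local Open Scope classical_set_scope.
Variables (R : realType) (k : nat) (delta : R).
Hypotheses (k_gt0 : (0 < k)%N) (delta_gt0 : 0 < delta)
  (delta_le : delta <= (2 * k%:R)^-1).

Local Notation K := (k%:R : R).
Local Notation N := (Num.truncn (1 / (2 * k%:R * delta) : R)).
Local Notation node i := (K * delta * i%:R).

Lemma kdelta_gt0 : 0 < K * delta.
Proof. by rewrite mulr_gt0 // ltr0n. Qed.

Lemma kdelta_le_half : K * delta <= 1/2.
Proof.
move: delta_le; rewrite invfM -(ler_pM2l (_ : 0 < K)) ?ltr0n //.
by rewrite mulrCA mulfV ?gt_eqF ?ltr0n // mulr1 div1r.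
Qed.

Lemma kdelta_truncn : node N <= 1/2 < K * delta * (N%:R + 1).
Proof.
have kd := kdelta_gt0.
have e : K * delta * (1 / (2 * K * delta)) = 1/2.
  by field; apply/andP; split; rewrite gt_eqF ?ltr0n.
have a0 : 0 <= 1 / (2 * K * delta).
  by apply: divr_ge0 => //; apply: ltW; rewrite !mulr_gt0 ?ltr0n.
have /andP[lo hi] := truncn_itv a0.
by rewrite -e ler_pM2l // ltr_pM2l // lo natr1.
Qed.

Lemma node_bounds i : (i <= N)%N -> 0 <= node i <= 1/2.
Proof.
move=> iN; have /andP[lo _] := kdelta_truncn; have kd := kdelta_gt0.
by rewrite mulr_ge0 ?(ltW kd) //= (le_trans _ lo) // ler_pM2l // ler_nat; exact: iN.
Qed.

Lemma in_Jint i x :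
  Jint k delta i x <-> node i <= x <= node i + K * delta / 2.
Proof. by rewrite /Jint /= in_itv /= mulrDr. Qed.

Lemma Jint_inj i j x : Jint k delta i x -> Jint k delta j x -> i = j.
Proof.
have kd := kdelta_gt0; have near_node l : Jint k delta l x -> 0 <= x - node l <= K * delta / 2.
  by move=> /in_Jint /andP[? ?]; apply/andP; split; lra.
move=> /near_node xi /near_node xj.
by apply: (grid_index_unique _ _ xi xj); lra.
Qed.

Lemma fdelta_Jint i x : (i <= N)%N -> Jint k delta i x -> fdelta k delta x = (-1) ^+ i.
Proof.
move=> iN Jx; rewrite /fdelta (bigD1 (Ordinal (iN : (i < N.+1)%N))) //= asboolT //.
rewrite big1 ?addr0 // => j /eqP ji; case: asboolP => // /Jint_inj/(_ Jx) eq_ji.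
by case: ji; apply: val_inj.
Qed.

Lemma fdelta_cases x : fdelta k delta x = 0 \/
  exists2 i, (i <= N)%N & Jint k delta i x.
Proof.
have [[i iN Ji]|none] := pselect (exists2 i, (i <= N)%N & Jint k delta i x).
  by right; exists i.
left; rewrite /fdelta big1 // => j _; case: asboolP => // Jj.
by case: none; exists j; rewrite // -ltnS.
Qed.

Lemma fdelta_gap i x : node i - K * delta / 2 < x < node i -> fdelta k delta x = 0.
Proof.
move=> /andP[x_gt x_lt]; have kd := kdelta_gt0.
rewrite /fdelta big1 // => l _; case: asboolP => // /in_Jint /andP[l1 l2].
have [li|il] := ltnP l i.
  have : l%:R + 1 <= i%:R :> R by rewrite natr1 ler_nat.
  by move=> ?; exfalso; nra.
have : i%:R <= l%:R :> R by rewrite ler_nat.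
by move=> ?; exfalso; nra.
Qed.

Local Notation h := (delta / (8 * K)).
Local Notation win i := (node i - K * h * vphi (node i) / 2 + h / 8).

Lemma k_mul_step : K * h = delta / 8.
Proof. by field; rewrite gt_eqF // ltr0n. Qed.

Lemma step_gt0 : 0 < h.
Proof. by rewrite divr_gt0 // mulr_gt0 ?ltr0n. Qed.

Lemma step_le_k_mul_step : h <= K * h.
Proof. by rewrite ler_peMl ?ler1n // ltW // step_gt0. Qed.

Lemma k_mul_step_le : K * h <= K * delta / 8.
Proof.
by rewrite k_mul_step ler_pM2r ?invr_gt0 // ler_peMl ?ler1n // ltW.
Qed.

Lemma window_near_node i x : (i <= N)%N -> win i <= x <= win i + h / 8 ->
  - (K * h) <= x - node i <= 0.
Proof.
move=> /node_bounds /andP[n0 n1] /andP[x1 x2].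
have /andP[v1 v2] : 1/2 <= vphi (node i) <= 1 by apply: vphi_bounds; lra.
have Kh0 : 0 <= K * h by rewrite mulr_ge0 ?ler0n // ltW // step_gt0.
have := ler_piMr Kh0 v2; have := ler_wpM2l Kh0 v1.
have := step_le_k_mul_step.
by move=> ? ? ?; apply/andP; split; lra.
Qed.

Lemma vphi_window_shift i x : (i <= N)%N -> - (K * h) <= x - node i <= 0 ->
  `|K * h * vphi x - K * h * vphi (node i)| <= h / 8.
Proof.
move=> /node_bounds /andP[n0 n1] /andP[x1 x2].
have := k_mul_step_le; have := kdelta_le_half => kd_le Kh_le.
have Kh0 : 0 < K * h by rewrite mulr_gt0 ?ltr0n // step_gt0.
have lip : `|vphi x - vphi (node i)| <= 2 * `|x - node i|.
  by apply: vphi_lipschitz; apply/andP; split; lra.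
have dist : `|x - node i| <= K * h by rewrite ler_norml; apply/andP; split; lra.
(* [2 (K h)^2 = h K delta / 4 <= h / 8] because [2 K delta <= 1] *)
have sq : 2 * (K * h) ^+ 2 <= h / 8.
  have -> : 2 * (K * h) ^+ 2 = h * (K * delta) / 4.
    by rewrite {1}k_mul_step; field; rewrite gt_eqF // ltr0n.
  by have := step_gt0; nra.
have d_le : `|vphi x - vphi (node i)| <= 2 * (K * h) by lra.
rewrite -mulrBr normrM gtr0_norm //; apply: le_trans sq.
by have := ler_wpM2l (ltW Kh0) d_le; rewrite expr2; nra.
Qed.

Lemma Delta_fdelta_window i x : (i <= N)%N -> win i <= x <= win i + h / 8 ->
  Delta k (h * vphi x) (fdelta k delta) x = (-1) ^+ i.
Proof.
move=> iN xw; have near := window_near_node iN xw.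
have := vphi_window_shift iN near; rewrite ler_norml => /andP[s1 s2].
have /andP[n0 n1] := node_bounds iN; move: xw near => /andP[x1 x2] /andP[d1 d2].
have := kdelta_le_half; have := kdelta_gt0; have := k_mul_step_le.
have := step_le_k_mul_step; have := step_gt0; move=> h0 h_le Kh_le kd kd_le.
have Kh0 : 0 <= K * h by lra.
have /andP[vi1 vi2] : 1/2 <= vphi (node i) <= 1 by apply: vphi_bounds; lra.
have /andP[vx1 _] : 1/2 <= vphi x <= 1 by apply: vphi_bounds; lra.
have := ler_piMr Kh0 vi2; have := ler_wpM2l Kh0 vi1.
have := ler_wpM2l (ltW h0) vx1; move=> H_ge B_ge B_le.
have mid : K * (h * vphi x) / 2 = K * h * vphi x / 2 by rewrite mulrA.
rewrite Delta_last_node ?mid.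
- by apply: fdelta_Jint => //; apply/in_Jint; apply/andP; split; lra.
- lra.
- lra.
- move=> j jk; apply: (@fdelta_gap i); rewrite ?mid.
  have jK : j%:R <= K - 1 by rewrite lerBrDr natr1 ler_nat.
  have H0 : 0 <= h * vphi x by lra.
  have := ler_wpM2r H0 jK; have := mulr_ge0 (ler0n _ j) H0.
  have KH : (K - 1) * (h * vphi x) = K * h * vphi x - h * vphi x by ring.
  by rewrite KH => ? ?; apply/andP; split; lra.
Qed.

Lemma window_in_domain i x : (i <= N)%N -> win i <= x <= win i + h / 8 ->
  -1 + 2 * K ^+ 2 * h ^+ 2 <= x <= 1 - 2 * K ^+ 2 * h ^+ 2 /\ -(1/2) <= x <= 3/4.
Proof.
move=> iN /(window_near_node iN) /andP[d1 d2]; have /andP[n0 n1] := node_bounds iN.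
have := k_mul_step_le; have := kdelta_le_half; have := kdelta_gt0.
move=> kd kd_le Kh_le; have Kh0 : 0 <= K * h by rewrite mulr_ge0 ?ler0n ?ltW ?step_gt0.
have -> : 2 * K ^+ 2 * h ^+ 2 = 2 * (K * h) ^+ 2 by ring.
by split; apply/andP; split; nra.
Qed.

Variables al be : R.
Local Notation W := (wab_bound al be).
Local Notation G := (fun x => wab al be x * fdelta k delta x).

Lemma Jint_bounds i x : (i <= N)%N -> Jint k delta i x -> 0 <= x <= 3/4.
Proof.
move=> /node_bounds /andP[n0 n1] /in_Jint /andP[x1 x2].
by have := kdelta_le_half; have := kdelta_gt0; lra.
Qed.

Lemma norm_wfdelta_Jint i x : (i <= N)%N -> Jint k delta i x -> W^-1 <= `|G x| <= W.
Proof.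
move=> iN Jx; have /andP[x0 x34] := Jint_bounds iN Jx.
have /andP[w1 w2] : W^-1 <= wab al be x <= W by apply: wab_bounds; lra.
have w0 : 0 <= wab al be x by apply: le_trans w1; rewrite invr_ge0 ltW // wab_bound_gt0.
by rewrite /= (fdelta_Jint iN Jx) normrM normrX normrN1 expr1n mulr1 ger0_norm ?w1.
Qed.

Lemma Lnorm11_wfdelta_ge p : (0 < p)%E -> ((Lnorm_cst p W^-1 (1/4))%:E <= Lnorm11 p G)%E.
Proof.
move=> p0; have kd := kdelta_gt0; have /andP[_ N_gt] := kdelta_truncn.
apply: (@LnormOn_ge_itv _ _ _ _ _ _ N.+1 (fun i => node i) (fun i => node i + K * delta / 2)).
- exact: p0.
- by rewrite invr_gt0 wab_bound_gt0.
- by [].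
- by move=> i _; lra.
- by move=> i j x _ _ /in_Jint xi /in_Jint xj; apply: Jint_inj xi xj.
- rewrite (eq_bigr (fun _ => K * delta / 2)); last by move=> i _; rewrite addrC addKr.
  move: N_gt; rewrite sumr_const card_ord; set n := Num.truncn _.
  by rewrite -[_ *+ n.+1]mulr_natr -(natr1 n); lra.
- move=> i x; rewrite ltnS => iN /in_Jint Jx; split; last first.
    by have /andP[] := norm_wfdelta_Jint iN Jx.
  by have := Jint_bounds iN Jx; rewrite /= in_itv /=; lra.
Qed.

Lemma Lnorm11_wfdelta_le p : (0 < p)%E -> (Lnorm11 p G <= (Lnorm_cst p W 1)%:E)%E.
Proof.
move=> p0; rewrite -[1]subr0; apply: LnormOn_le_itv => //.
- by rewrite ltW // wab_bound_gt0.
- move=> x _; have [/= ->|[i iN Jx]] := fdelta_cases x.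
    by rewrite mulr0 normr0 mulr_ge0 // ltW // wab_bound_gt0.
  have /andP[_ G_le] := norm_wfdelta_Jint iN Jx.
  rewrite indicE mem_set ?mulr1 //= in_itv /=.
  by have /andP[? ?] := Jint_bounds iN Jx; apply/andP; split; lra.
Qed.

Lemma Omega_fdelta_ge q : (0 < q)%E ->
  ((Lnorm_cst q W^-1 (128 * K ^+ 2)^-1)%:E <=
    Omega k (fdelta k delta) delta (wab al be) q)%E.
Proof.
move=> q0; have h0 := step_gt0; have kd := kdelta_gt0.
have K0 : 0 < K by rewrite ltr0n.
apply: le_trans (@LnormOn_le_Omega _ _ _ _ _ h _ _); last first.
  by have := step_le_k_mul_step; rewrite k_mul_step h0 /= => ?; lra.
apply: (@LnormOn_ge_itv _ _ _ _ _ _ N.+1 (fun i => win i) (fun i => win i + h / 8)).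
- exact: q0.
- by rewrite invr_gt0 wab_bound_gt0.
- by rewrite invr_gt0 mulr_gt0 ?exprn_gt0.
- by move=> i _; lra.
- move=> i j x iN jN /(window_near_node iN) xi /(window_near_node jN) xj.
  by apply: (grid_index_unique _ _ xi xj); have := k_mul_step_le; lra.
- have /andP[_ N_gt] := kdelta_truncn.
  rewrite (eq_bigr (fun _ => h / 8)); last by move=> i _; rewrite addrC addKr.
  move: N_gt; rewrite sumr_const card_ord; set n := Num.truncn _.
  rewrite -[_ *+ n.+1]mulr_natr -(natr1 n) => N_gt.
  have -> : h / 8 * (n%:R + 1) = K * delta * (n%:R + 1) / (64 * K ^+ 2).
    by field; rewrite gt_eqF.
  rewrite ler_pdivlMr ?mulr_gt0 ?exprn_gt0 //.
  have -> : (128 * K ^+ 2)^-1 * (64 * K ^+ 2) = 1/2.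
    by field; rewrite gt_eqF.
  exact: ltW.
- move=> i x iN xw; rewrite ltnS in iN.
  have [dom /andP[x1 x2]] := window_in_domain iN xw.
  split; first by rewrite /= in_itv.
  rewrite /= (Delta_fdelta_window iN xw) normrM normrX normrN1 expr1n mulr1.
  have /andP[w1 _] : W^-1 <= wab al be x <= W by apply: wab_bounds; lra.
  by rewrite ger0_norm // (le_trans _ w1) // invr_ge0 ltW // wab_bound_gt0.
Qed.
End fdelta_estimates.

Theorem lemma6p1 (R : realType) (k : nat) (alpha beta : R) (p q : \bar R) :
  (0 < k)%N -> (0 < p)%E -> (0 < q)%E ->
  exists c1 c2 c : R, [/\ 0 < c1, 0 < c2, 0 < c &
    forall delta : R, 0 < delta -> delta <= (2 * k%:R)^-1 ->
      [/\ (c1%:E <= Lnorm11 p (fun x => (wab alpha beta x * fdelta k delta x)%R))%E,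
          (Lnorm11 p (fun x => (wab alpha beta x * fdelta k delta x)%R) <= c2%:E)%E &
          (c%:E <= Omega k (fdelta k delta) delta (wab alpha beta) q)%E]].
Proof.
move=> k_gt0 p_gt0 q_gt0; set W := wab_bound alpha beta.
have W_gt0 : 0 < W by exact: wab_bound_gt0.
exists (Lnorm_cst p W^-1 (1/4)), (Lnorm_cst p W 1), (Lnorm_cst q W^-1 (128 * k%:R ^+ 2)^-1).
split; try apply: Lnorm_cst_gt0; rewrite ?invr_gt0 ?mulr_gt0 ?exprn_gt0 ?ltr0n //.
move=> delta delta_gt0 delta_le; split.
- exact: Lnorm11_wfdelta_ge.
- exact: Lnorm11_wfdelta_le.
- exact: Omega_fdelta_ge.
Qed.
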